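(* Let $m,n\geq2$, let $\mathbf p\in\mathbb R^m$, $\mathbf q\in\mathbb R^n$ be probability vectors with all entries strictly positive, and let $\Psi$ be strict Schur-concave on $\mathcal C(\mathbf p,\mathbf q)$. Let $P\in\mathcal C(\mathbf p,\mathbf q)$, and let $A=(a_{s,t})_{2\times2}$ with $a_{s,t}=p_{i_s,j_t}$ be a $2\times2$ submatrix of $P$ (distinct rows $i_1,i_2$, distinct columns $j_1,j_2$) with $\max(a_{1,1},a_{2,2})\geq\max(a_{1,2},a_{2,1})$. Let $b=\min(a_{1,2},a_{2,1})$, let $A'$ have entries $a'_{s,s}=a_{s,s}+b$ ($s=1,2$), $a'_{1,2}=a_{1,2}-b$, $a'_{2,1}=a_{2,1}-b$, and let $P'$ be obtained from $P$ by replacing $A$ with $A'$. Then $P'\in\mathcal C(\mathbf p,\mathbf q)$ and, as vectors in $\mathbb R^{mn}$, $P\preceq P'$, hence $\Psi(P')\leq\Psi(P)$. In particular, if $b>0$ then $P\prec P'$ and $\Psi(P')<\Psi(P)$.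
   Context: $\mathcal C(\mathbf p,\mathbf q)$: nonnegative $m\times n$ matrices with row sums $p_i$, column sums $q_j$, viewed as vectors in $\mathbb R^{mn}$. Majorization: for $x,y\in\mathbb R^N$ with decreasing rearrangements $\bar x,\bar y$ and $F_{\bar x}(i)=\sum_{k\le i}\bar x_k$, $x\preceq y$ if $F_{\bar x}(i)\le F_{\bar y}(i)$ for $1\le i<N$ and $F_{\bar x}(N)=F_{\bar y}(N)$; $x\prec y$ if moreover strict inequality holds for some $i<N$. $\Psi$ (symmetric) is strict Schur-concave if $x\preceq y$ implies $\Psi(x)\ge\Psi(y)$ and $x\prec y$ implies $\Psi(x)>\Psi(y)$. *)

From HB Require Import structures.
From mathcomp Require Import all_boot all_order all_algebra.
Set Implicit Arguments. Unset Strict Implicit. Unset Printing Implicit Defensive.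
Import Order.TTheory GRing.Theory Num.Theory.
Local Open Scope ring_scope.

Definition transport_poly (R : realFieldType) (m n : nat)
  (p : 'I_m -> R) (q : 'I_n -> R) (P : 'M[R]_(m, n)) : Prop :=
  (forall i j, 0 <= P i j) /\
  (forall i, \sum_(j < n) P i j = p i) /\
  (forall j, \sum_(i < m) P i j = q j).

Definition entries (R : realFieldType) (N : nat) (x : 'rV[R]_N) : seq R :=
  [seq x 0 k | k <- enum 'I_N].

Definition decr (R : realFieldType) (N : nat) (x : 'rV[R]_N) : seq R :=
  sort (fun a b : R => b <= a) (entries x).

Definition Fbar (R : realFieldType) (N : nat) (x : 'rV[R]_N) (i : nat) : R :=
  \sum_(k < i) nth 0 (decr x) k.

Definition majorized (R : realFieldType) (N : nat) (x y : 'rV[R]_N) : Prop :=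
  (forall i : nat, (1 <= i < N)%N -> Fbar x i <= Fbar y i) /\
  Fbar x N = Fbar y N.

Definition strictly_majorized (R : realFieldType) (N : nat) (x y : 'rV[R]_N)
  : Prop :=
  majorized x y /\ exists i : nat, (1 <= i < N)%N /\ Fbar x i < Fbar y i.

Definition strict_schur_concave_on (R : realFieldType) (m n : nat)
  (C : 'M[R]_(m, n) -> Prop) (Psi : 'M[R]_(m, n) -> R) : Prop :=
  (forall X Y, C X -> C Y -> majorized (mxvec X) (mxvec Y) -> Psi Y <= Psi X) /\
  (forall X Y, C X -> C Y -> strictly_majorized (mxvec X) (mxvec Y) ->
     Psi Y < Psi X).

Definition shift2x2 (R : realFieldType) (m n : nat) (P : 'M[R]_(m, n))
  (i1 i2 : 'I_m) (j1 j2 : 'I_n) : 'M[R]_(m, n) :=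
  let b := Num.min (P i1 j2) (P i2 j1) in
  \matrix_(i, j)
    if (i == i1) && (j == j1) then P i j + b
    else if (i == i2) && (j == j2) then P i j + b
    else if (i == i1) && (j == j2) then P i j - b
    else if (i == i2) && (j == j1) then P i j - b
    else P i j.

From HB Require Import structures.
From mathcomp Require Import all_boot all_order all_algebra.
From mathcomp Require Import perm ring.
Set Implicit Arguments. Unset Strict Implicit. Unset Printing Implicit Defensive.
Import Order.TTheory GRing.Theory Num.Theory.
Local Open Scope ring_scope.

(* P' arises from P by two transfers of mass b: first from the larger
   off-diagonal entry to the larger diagonal entry, then from the smaller
   off-diagonal entry (which becomes 0) to the other diagonal entry.  Since
   F(k) is the largest sum of k entries, a transfer of t >= 0 from x_c to x_a
   with x_c <= x_a + t can only increase each F(k).  If moreover t > 0 and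
   x_c < x_a + t, the transfer strictly increases the sum of squares, which
   the decreasing rearrangement, hence the sequence F(k), determines; so some
   F(k) with k < N increases strictly. *)

Section Majorization.
Variables (R : realFieldType) (N : nat).
Implicit Types (x y z : 'rV[R]_N) (t : R).

Lemma size_decr x : size (decr x) = N.
Proof. by rewrite /decr size_sort /entries size_map size_enum_ord. Qed.

Lemma sorted_decr x : sorted (fun a b : R => b <= a) (decr x).
Proof. by apply: sort_sorted => a b; exact: le_total. Qed.

Lemma sum_decr (F : R -> R) x : \sum_(a <- decr x) F a = \sum_i F (x 0 i).
Proof. by rewrite (perm_big _ (permEl (perm_sort _ _))) big_map big_enum. Qed.

Lemma Fbar_total x : Fbar x N = \sum_i x 0 i.
Proof. by rewrite -(sum_decr id) (big_nth 0) size_decr big_mkord. Qed.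

Lemma nth_decr_Fbar x k : nth 0 (decr x) k = Fbar x k.+1 - Fbar x k.
Proof. by rewrite /Fbar big_ord_recr /= addrC addrK. Qed.

Lemma decr_perm x : exists s : 'S_N, forall i, x 0 i = nth 0 (decr x) (s i).
Proof.
have sz : size (decr x) == N by rewrite size_decr.
have : perm_eq (entries x) (Tuple sz) by rewrite perm_sym perm_sort.
case/tuple_permP => s entriesE; exists s => i.
have := congr1 (nth 0 ^~ i) entriesE.
rewrite /entries (nth_map i) ?size_enum_ord // nth_ord_enum => ->.
by rewrite nth_mktuple (tnth_nth 0).
Qed.

Lemma card_ord_lt k : (k <= N)%N -> #|[set j : 'I_N | (j < k)%N]| = k.
Proof.
move=> le_kN; rewrite -sum1_card (eq_bigl (fun j : 'I_N => (j < k)%N)).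
  by rewrite -(big_ord_widen N (fun _ => 1%N)) // sum1_card card_ord.
by move=> j; rewrite inE.
Qed.

Lemma Fbar_widen x k : (k <= N)%N ->
  Fbar x k = \sum_(j in [set j : 'I_N | (j < k)%N]) nth 0 (decr x) j.
Proof.
move=> le_kN; rewrite /Fbar (big_ord_widen N (fun j => nth 0 (decr x) j)) //.
by apply: eq_bigl => j; rewrite inE.
Qed.

Lemma nth_decr_le x i j : (i <= j < N)%N -> nth 0 (decr x) j <= nth 0 (decr x) i.
Proof.
case/andP=> le_ij lt_jN.
have le_rev_trans : transitive (fun a b : R => b <= a).
  by move=> b a c le_ba le_cb; exact: le_trans le_cb le_ba.
apply: (sorted_leq_nth le_rev_trans (@lexx _ _) 0 (sorted_decr x)) => //.
  by rewrite inE size_decr (leq_ltn_trans le_ij).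
by rewrite inE size_decr.
Qed.

Lemma ler_sum_exchange (T : finType) (f : T -> R) (B C : {set T}) t :
  #|B| = #|C| -> {in B :\: C, forall i, f i <= t} ->
  {in C :\: B, forall i, t <= f i} ->
  \sum_(i in B) f i <= \sum_(i in C) f i.
Proof.
move=> eq_card le_ft le_tf.
rewrite (big_setID C) [leRHS](big_setID B) /= setIC lerD2l.
have card_diff : #|B :\: C| = #|C :\: B|.
  by apply/eqP; rewrite -(eqn_add2l #|B :&: C|) cardsID setIC cardsID eq_card.
apply: (@le_trans _ _ (\sum_(i in B :\: C) t)); first exact: ler_sum.
by rewrite sumr_const card_diff -sumr_const; exact: ler_sum.
Qed.

Lemma sum_le_Fbar x (A : {set 'I_N}) : \sum_(i in A) x 0 i <= Fbar x #|A|.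
Proof.
have [s xE] := decr_perm x.
have le_AN : (#|A| <= N)%N by rewrite -[X in (_ <= X)%N]card_ord max_card.
rewrite Fbar_widen // (eq_bigr _ (fun i _ => xE i)).
rewrite -(big_imset (fun j : 'I_N => nth 0 (decr x) j)) /=; last first.
  by move=> i j _ _; exact: perm_inj.
apply: (ler_sum_exchange (t := nth 0 (decr x) #|A|.-1)).
- by rewrite card_imset ?card_ord_lt //; exact: perm_inj.
- move=> j; rewrite !inE -leqNgt => /andP [le_Aj _]; apply: nth_decr_le.
  by rewrite ltn_ord (leq_trans (leq_pred _) le_Aj).
- move=> j; rewrite !inE => /andP [_ lt_jA]; apply: nth_decr_le.
  have A_gt0 : (0 < #|A|)%N by apply: leq_ltn_trans lt_jA.
  by rewrite -ltnS prednK // lt_jA (leq_trans _ le_AN) // ltn_predL.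
Qed.

Lemma Fbar_attained x k : (k <= N)%N ->
  exists2 A : {set 'I_N}, #|A| = k & Fbar x k = \sum_(i in A) x 0 i.
Proof.
move=> le_kN; have [s xE] := decr_perm x.
exists (s @^-1: [set j : 'I_N | (j < k)%N]).
  by rewrite card_preimset ?card_ord_lt //; exact: perm_inj.
rewrite Fbar_widen // (reindex_inj (@perm_inj _ s)) /=.
by apply: eq_big => [i|i _]; rewrite ?inE // xE.
Qed.

Lemma majorized_trans x y z : majorized x y -> majorized y z -> majorized x z.
Proof.
move=> [le_xy eq_xy] [le_yz eq_yz]; split; last by rewrite eq_xy.
by move=> k k_range; rewrite (le_trans (le_xy k k_range)) ?le_yz.
Qed.

Lemma strictly_majorized_trans x y z :
  strictly_majorized x y -> majorized y z -> strictly_majorized x z.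
Proof.
move=> [maj_xy [k [k_range lt_xy]]] maj_yz; split; first exact: majorized_trans maj_yz.
by exists k; split => //; rewrite (lt_le_trans lt_xy) ?maj_yz.1.
Qed.

Definition sqsum x := \sum_i x 0 i ^+ 2.

Lemma decr_eq x y :
  (forall k, (k <= N)%N -> Fbar x k = Fbar y k) -> decr x = decr y.
Proof.
move=> eqF; apply: (@eq_from_nth _ 0); rewrite !size_decr // => k lt_kN.
by rewrite !nth_decr_Fbar !eqF // ltnW.
Qed.

Lemma strictly_majorized_of_sqsum x y :
  majorized x y -> sqsum x < sqsum y -> strictly_majorized x y.
Proof.
move=> [le_xy eq_xyN] lt_sq; split => //.
case: (boolP [exists k : 'I_N, (1 <= k)%N && (Fbar x k < Fbar y k)]).
  by case/existsP=> k /andP [k_ge1 lt_k]; exists k; rewrite k_ge1 ltn_ord.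
rewrite negb_exists => /forallP no_strict.
suff decr_xy : decr x = decr y.
  by move: lt_sq; rewrite /sqsum -!(sum_decr (fun a => a ^+ 2)) decr_xy ltxx.
apply: decr_eq => -[|k] le_kN; first by rewrite /Fbar !big_ord0.
have [lt_kN | ge_kN] := ltnP k.+1 N; last first.
  by have -> : k.+1 = N by apply/eqP; rewrite eqn_leq le_kN ge_kN.
have := no_strict (Ordinal lt_kN); rewrite /= -leNgt => le_yx.
by apply/eqP; rewrite eq_le le_yx le_xy.
Qed.

Lemma sum_indicator (T : finType) (A : {set T}) (b : T) :
  \sum_(i in A) (i == b)%:R = (b \in A)%:R :> R.
Proof.
have [bA | bNA] := boolP (b \in A).
  rewrite (big_setD1 b bA) /= eqxx big1 ?addr0 // => i.
  by rewrite !inE => /andP [/negbTE ->].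
by rewrite big1 // => i iA; case: eqP iA => // ->; rewrite (negbTE bNA).
Qed.

Definition transfer x t (c a : 'I_N) : 'rV[R]_N := x + t *: ('e_a - 'e_c).

Lemma transferE x t c a i :
  transfer x t c a 0 i = x 0 i + t * ((i == a)%:R - (i == c)%:R).
Proof. by rewrite !mxE. Qed.

Lemma sum_transfer x t c a (A : {set 'I_N}) :
  \sum_(i in A) transfer x t c a 0 i =
  \sum_(i in A) x 0 i + t * ((a \in A)%:R - (c \in A)%:R).
Proof.
rewrite (eq_bigr _ (fun i _ => transferE x t c a i)) big_split /=.
by rewrite -mulr_sumr sumrB !sum_indicator.
Qed.

Lemma majorized_transfer x t c a :
  0 <= t -> x 0 c <= x 0 a + t -> majorized x (transfer x t c a).
Proof.
move=> t_ge0 le_ca; split; last first.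
  have sumT y : \sum_(i in [set: 'I_N]) y 0 i = Fbar y N.
    by rewrite Fbar_total; apply: eq_bigl => i; rewrite inE.
  by have := sum_transfer x t c a setT; rewrite !inE subrr mulr0 addr0 !sumT.
move=> k /andP [_ lt_kN]; have [A <- ->] := Fbar_attained x (ltnW lt_kN).
have [gain | /norP [aNA /negPn cA]] := boolP ((a \in A) || (c \notin A)).
  apply: le_trans (sum_le_Fbar _ A); rewrite sum_transfer lerDl mulr_ge0 //.
  by case/orP: gain => [-> | /negbTE ->]; case: (_ \in A); rewrite ?subr0 ?subrr.
set A' := a |: (A :\ c).
have aNAc : a \notin A :\ c by rewrite inE negb_and aNA orbT.
have -> : #|A| = #|A'| by rewrite cardsU1 aNAc (cardsD1 c A) cA.
apply: le_trans (sum_le_Fbar _ A').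
rewrite sum_transfer (big_setD1 c cA) big_setU1 //= !inE eqxx /=.
have -> : (c == a) = false by apply: contraNF aNA => /eqP <-.
by rewrite eqxx /= subr0 mulr1 addrAC lerD2r.
Qed.

Lemma sqsum_transfer x t c a : c != a ->
  sqsum (transfer x t c a) = sqsum x + 2 * t * (x 0 a + t - x 0 c).
Proof.
move=> ca; have ac : (a == c) = false by rewrite eq_sym (negbTE ca).
have split2 (F : 'I_N -> R) :
    \sum_i F i = F a + F c + \sum_(i | (i != a) && (i != c)) F i.
  by rewrite (bigD1 a) //= (bigD1 c) //= addrA.
have rest : \sum_(i | (i != a) && (i != c)) transfer x t c a 0 i ^+ 2 =
            \sum_(i | (i != a) && (i != c)) x 0 i ^+ 2.
  apply: eq_bigr => i /andP [/negbTE ia /negbTE ic].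
  by rewrite transferE ia ic subrr mulr0 addr0.
rewrite /sqsum !split2 rest !transferE !eqxx ac (negbTE ca) /=; ring.
Qed.

Lemma strictly_majorized_transfer x t c a :
  c != a -> 0 < t -> x 0 c < x 0 a + t -> strictly_majorized x (transfer x t c a).
Proof.
move=> ca t_gt0 lt_ca; apply: strictly_majorized_of_sqsum.
  by apply: majorized_transfer; rewrite ?ltW.
by rewrite sqsum_transfer // ltrDl !mulr_gt0 // subr_gt0.
Qed.

Definition cross_shift x (a a' c d : 'I_N) : 'rV[R]_N :=
  x + Num.min (x 0 c) (x 0 d) *: ('e_a + 'e_a' - 'e_c - 'e_d).

Lemma majorized_cross_shift x a a' c d :
  uniq [:: a; a'; c; d] -> (forall i, 0 <= x 0 i) ->
  Num.max (x 0 c) (x 0 d) <= Num.max (x 0 a) (x 0 a') ->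
  majorized x (cross_shift x a a' c d) /\
  (0 < Num.min (x 0 c) (x 0 d) -> strictly_majorized x (cross_shift x a a' c d)).
Proof.
move=> + x_ge0.
wlog le_a'a : a a' / x 0 a' <= x 0 a.
  move=> base; case/orP: (le_total (x 0 a') (x 0 a)); first exact: base.
  move=> le_aa' uniq_aa'cd le_max.
  rewrite [cross_shift _ _ _ _ _](_ : _ = cross_shift x a' a c d); last first.
    by rewrite /cross_shift (addrC 'e_a).
  apply: base => //; last by rewrite [leRHS]maxC.
  rewrite (perm_uniq (permEl (perm_catCA [:: a'] [:: a] [:: c; d]))).
  exact: uniq_aa'cd.
wlog le_dc : c d / x 0 d <= x 0 c.
  move=> base; case/orP: (le_total (x 0 d) (x 0 c)); first exact: base.
  move=> le_cd uniq_aa'cd le_max.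
  rewrite [cross_shift _ _ _ _ _](_ : _ = cross_shift x a a' d c); last first.
    by rewrite /cross_shift minC addrAC.
  rewrite minC; apply: base => //; last by rewrite [leLHS]maxC.
  rewrite (perm_uniq (_ : perm_eq _ [:: a; a'; c; d])) // (perm_cat2l [:: a; a']).
  exact: permEl (perm_catC [:: d] [:: c]).
rewrite /= !inE !negb_or -!andbA.
move=> /and5P [aa' ac ad a'c /andP [_ /andP [cd _]]] le_max.
have -> : cross_shift x a a' c d = transfer (transfer x (x 0 d) c a) (x 0 d) d a'.
  by apply/rowP => i; rewrite /cross_shift /transfer (min_r le_dc) !mxE; ring.
rewrite (min_r le_dc); set t := x 0 d; set Q := transfer x t c a.
have Qd : Q 0 d = t.
  by rewrite transferE eq_sym (negbTE ad) eq_sym (negbTE cd) subrr mulr0 addr0.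
have Qa' : Q 0 a' = x 0 a'.
  by rewrite transferE eq_sym (negbTE aa') (negbTE a'c) subrr mulr0 addr0.
have le_ca : x 0 c <= x 0 a.
  by move: le_max; rewrite (max_l le_dc) (max_l le_a'a).
have maj_xQ : majorized x Q.
  by apply: majorized_transfer; rewrite ?x_ge0 // (le_trans le_ca) // lerDl x_ge0.
have maj_Qy : majorized Q (transfer Q t d a').
  by apply: majorized_transfer; rewrite ?x_ge0 // Qd Qa' lerDr x_ge0.
split; first exact: majorized_trans maj_Qy.
move=> t_gt0; apply: strictly_majorized_trans maj_Qy.
by apply: strictly_majorized_transfer; rewrite // 1?eq_sym // ltr_pwDr.
Qed.

End Majorization.

Section TwoByTwo.
Variables (R : realFieldType) (m n : nat).
Implicit Types (P : 'M[R]_(m, n)) (i : 'I_m) (j : 'I_n).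

Lemma mxvec_index_inj : injective (fun ij : 'I_m * 'I_n => mxvec_index ij.1 ij.2).
Proof. by case=> i j [i' j'] /cast_ord_inj/enum_rank_inj. Qed.

Lemma uniq_mxvec_index2x2 i1 i2 j1 j2 : i1 != i2 -> j1 != j2 ->
  uniq [:: mxvec_index i1 j1; mxvec_index i2 j2; mxvec_index i1 j2; mxvec_index i2 j1].
Proof.
move=> i12 j12.
rewrite (map_inj_uniq mxvec_index_inj [:: (i1, j1); (i2, j2); (i1, j2); (i2, j1)]).
have i21 : (i2 == i1) = false by rewrite eq_sym (negbTE i12).
have j21 : (j2 == j1) = false by rewrite eq_sym (negbTE j12).
by rewrite /= !inE !xpair_eqE !eqxx (negbTE i12) (negbTE j12) i21 j21.
Qed.

Lemma shift2x2E P i1 i2 j1 j2 : i1 != i2 -> j1 != j2 ->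
  shift2x2 P i1 i2 j1 j2 = P + Num.min (P i1 j2) (P i2 j1) *:
    (delta_mx i1 j1 + delta_mx i2 j2 - delta_mx i1 j2 - delta_mx i2 j1).
Proof.
move=> i12 j12; apply/matrixP => i j; rewrite !mxE.
have [e1|n1] := eqVneq i i1; have [e2|n2] := eqVneq i i2;
  have [e3|n3] := eqVneq j j1; have [e4|n4] := eqVneq j j2; rewrite /=; try ring.
all: by subst; rewrite eqxx in i12 j12.
Qed.

Lemma mxvec_shift2x2 P i1 i2 j1 j2 : i1 != i2 -> j1 != j2 ->
  mxvec (shift2x2 P i1 i2 j1 j2) = cross_shift (mxvec P)
    (mxvec_index i1 j1) (mxvec_index i2 j2) (mxvec_index i1 j2) (mxvec_index i2 j1).
Proof.
move=> i12 j12; rewrite shift2x2E // /cross_shift !mxvecE.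
by rewrite linearD linearZ /= !linearB linearD /= !mxvec_delta.
Qed.

Lemma sum_indicator_pair_row i' j' i : \sum_j ((i == i') && (j == j'))%:R = (i == i')%:R :> R.
Proof.
by rewrite (bigD1 j') //= eqxx andbT big1 ?addr0 // => j /negbTE ->; rewrite andbF.
Qed.

Lemma sum_indicator_pair_col i' j' j : \sum_i ((i == i') && (j == j'))%:R = (j == j')%:R :> R.
Proof.
by rewrite (bigD1 i') //= eqxx big1 ?addr0 // => i /negbTE ->.
Qed.

Lemma transport_poly_shift2x2 p q P i1 i2 j1 j2 : i1 != i2 -> j1 != j2 ->
  transport_poly p q P -> transport_poly p q (shift2x2 P i1 i2 j1 j2).
Proof.
move=> i12 j12 [P_ge0 [row_sum col_sum]].
set b := Num.min (P i1 j2) (P i2 j1).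
have b_ge0 : 0 <= b by rewrite le_min !P_ge0.
split; [|split].
- move=> i j; rewrite mxE -/b.
  case: ifP => _; first by rewrite addr_ge0.
  case: ifP => _; first by rewrite addr_ge0.
  case: ifP => [/andP [/eqP -> /eqP ->]|_]; first by rewrite subr_ge0 ge_min lexx.
  case: ifP => [/andP [/eqP -> /eqP ->]|_]; first by rewrite subr_ge0 ge_min lexx orbT.
  exact: P_ge0.
- move=> i; rewrite -row_sum shift2x2E //; under eq_bigr do rewrite !mxE.
  by rewrite big_split /= -mulr_sumr !sumrB big_split /= !sum_indicator_pair_row; ring.
- move=> j; rewrite -col_sum shift2x2E //; under eq_bigr do rewrite !mxE.
  by rewrite big_split /= -mulr_sumr !sumrB big_split /= !sum_indicator_pair_col; ring.
Qed.

End TwoByTwo.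

Unset Implicit Arguments.

Theorem lemma4p1 (R : realFieldType) (m n : nat)
  (p : 'I_m -> R) (q : 'I_n -> R) (Psi : 'M[R]_(m, n) -> R)
  (P : 'M[R]_(m, n)) (i1 i2 : 'I_m) (j1 j2 : 'I_n) :
  (2 <= m)%N -> (2 <= n)%N ->
  (forall i, 0 < p i) -> \sum_(i < m) p i = 1 ->
  (forall j, 0 < q j) -> \sum_(j < n) q j = 1 ->
  strict_schur_concave_on (transport_poly p q) Psi ->
  transport_poly p q P ->
  i1 != i2 -> j1 != j2 ->
  Num.max (P i2 j1) (P i1 j2) <= Num.max (P i1 j1) (P i2 j2) ->
  let b := Num.min (P i1 j2) (P i2 j1) in
  let P' := shift2x2 P i1 i2 j1 j2 in
  [/\ transport_poly p q P',
      majorized (mxvec P) (mxvec P'),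
      Psi P' <= Psi P &
      (0 < b -> strictly_majorized (mxvec P) (mxvec P') /\ Psi P' < Psi P)].
Proof.
move=> _ _ _ _ _ _ [Psi_le Psi_lt] P_tp i12 j12 le_max b P'.
have P'_tp : transport_poly p q P' by exact: transport_poly_shift2x2.
have P_ge0 k : 0 <= mxvec P 0 k by case/mxvec_indexP: k => i j; rewrite mxvecE P_tp.1.
have := majorized_cross_shift (uniq_mxvec_index2x2 i12 j12) P_ge0.
rewrite -mxvec_shift2x2 // !mxvecE maxC -/b -/P' => /(_ le_max) [maj strict].
split => //; first exact: Psi_le.
by move=> /strict lt_PP'; split => //; exact: Psi_lt.
Qed.
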